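(* Let $X$ be a non-empty set, $R$ a binary relation on $X$, and $\tau$ a compact topology on $X$. Suppose $R$ is upper tc-semicontinuous with respect to $\tau$. Then there exists a non-empty $w$-stable set of $(X,R)$.
   Context: For a binary relation $R$ on $X$, the transitive closure $\overline{R}$ is defined by: $x\overline{R}y$ iff there exist $K\ge 1$ and $x_0,\dots,x_K\in X$ with $x_0=x$, $x_K=y$, and $x_{k-1}Rx_k$ for all $k\in\{1,\dots,K\}$. A set $F\subseteq X$ is a $w$-stable set of $(X,R)$ if (i) (internal stability) for all distinct $x,y\in F$, $(x,y)\notin\overline{R}$; and (ii) (external stability) for all $x\in F$ and $y\in X\setminus F$, if $y\overline{R}x$ then $x\overline{R}y$. $R$ is upper tc-semicontinuous with respect to $\tau$ if for every $x\in X$ the set $\{y\in X: x\overline{R}y\}$ is open in $\tau$. A topology is compact if every open cover of $X$ has a finite subcover. *)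

From Stdlib Require Import Classical List.

Section Defs.
Variable X : Type.

Inductive tc (R : X -> X -> Prop) : X -> X -> Prop :=
| tc_step : forall x y, R x y -> tc R x y
| tc_cons : forall x y z, R x y -> tc R y z -> tc R x z.

Record is_topology (tau : (X -> Prop) -> Prop) : Prop := {
  top_full : tau (fun _ => True);
  top_empty : tau (fun _ => False);
  top_inter : forall U V, tau U -> tau V -> tau (fun x => U x /\ V x);
  top_union : forall (F : (X -> Prop) -> Prop),
      (forall U, F U -> tau U) -> tau (fun x => exists U, F U /\ U x)
}.

Definition compact_top (tau : (X -> Prop) -> Prop) : Prop :=
  forall (I : Type) (U : I -> X -> Prop),
    (forall i, tau (U i)) -> (forall x, exists i, U i x) ->
    exists l : list I, forall x, exists i, List.In i l /\ U i x.

Definition upper_tc_semicontinuous (R : X -> X -> Prop)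
    (tau : (X -> Prop) -> Prop) : Prop :=
  forall x, tau (fun y => tc R x y).

Definition w_stable (R : X -> X -> Prop) (F : X -> Prop) : Prop :=
  (forall x y, F x -> F y -> x <> y -> ~ tc R x y) /\
  (forall x y, F x -> ~ F y -> tc R y x -> tc R x y).

End Defs.
Arguments tc {X}.
Arguments compact_top {X}.
Arguments is_topology {X}.
Arguments upper_tc_semicontinuous {X}.
Arguments w_stable {X}.

(* Say [y] dominates [x] when [y] reaches [x] in the transitive closure but not
   conversely. The singleton of an undominated point is w-stable. If every point
   were dominated, the open sets [{z | y R* z}] would cover X; in a finite
   subcover indexed by [l] pick [m] undominated within [l]. Some [y] dominates
   [m], and [y] lies in the set of some [j] in [l], so [j] dominates [m]. *)
From Stdlib Require Import Classical List.

Lemma tc_trans (X : Type) (R : X -> X -> Prop) (x y z : X) :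
  tc R x y -> tc R y z -> tc R x z.
Proof.
  induction 1 as [x y Hxy | x y w Hxy _ IH]; intros Hz.
  - exact (tc_cons _ R x y z Hxy Hz).
  - exact (tc_cons _ R x y z Hxy (IH Hz)).
Qed.

Lemma list_minimal_exists (A : Type) (S : A -> A -> Prop)
    (S_irrefl : forall a, ~ S a a)
    (S_trans : forall a b c, S a b -> S b c -> S a c) (l : list A) :
  l <> nil -> exists m, In m l /\ forall b, In b l -> ~ S b m.
Proof.
  induction l as [|a l IH]; intros Hne; [congruence|].
  destruct l as [|c l].
  - exists a; split; [now left|].
    intros b [<-|[]]; apply S_irrefl.
  - destruct IH as [m [Hm Hmin]]; [discriminate|].
    destruct (classic (S a m)) as [Ham|Ham].
    + exists a; split; [now left|].
      intros b [<-|Hb]; [apply S_irrefl|].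
      intros Hba; exact (Hmin b Hb (S_trans b a m Hba Ham)).
    + exists m; split; [now right|].
      intros b [<-|Hb]; [exact Ham | exact (Hmin b Hb)].
Qed.

Section Undominated.
Variables (X : Type) (R : X -> X -> Prop).

Definition tc_dominates (a b : X) : Prop := tc R a b /\ ~ tc R b a.

Lemma tc_dominates_irrefl (a : X) : ~ tc_dominates a a.
Proof. intros [H H']; exact (H' H). Qed.

Lemma tc_dominates_trans (a b c : X) :
  tc_dominates a b -> tc_dominates b c -> tc_dominates a c.
Proof.
  intros [Hab Hba] [Hbc _]; split.
  - exact (tc_trans X R a b c Hab Hbc).
  - intros Hca; exact (Hba (tc_trans X R b c a Hbc Hca)).
Qed.

Definition tc_undominated (x : X) : Prop := forall y, tc R y x -> tc R x y.

Lemma w_stable_singleton (x : X) :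
  tc_undominated x -> w_stable R (fun z => z = x).
Proof.
  intros Hx; split.
  - intros a b -> -> Hab; congruence.
  - intros a b -> _; apply Hx.
Qed.

Lemma dominated_of_not_undominated (x : X) :
  ~ tc_undominated x -> exists y, tc_dominates y x.
Proof.
  intros Hx; apply NNPP; intros Hno; apply Hx; intros y Hyx.
  apply NNPP; intros Hxy; apply Hno; now exists y.
Qed.

Lemma exists_tc_undominated (tau : (X -> Prop) -> Prop) :
  (exists x : X, True) -> compact_top tau -> upper_tc_semicontinuous R tau ->
  exists x, tc_undominated x.
Proof.
  intros [x0 _] Hcomp Husc.
  apply NNPP; intros Hno.
  assert (Hdom : forall x, exists y, tc_dominates y x).
  { intros x; apply dominated_of_not_undominated; intros Hx; apply Hno.
    now exists x. }
  destruct (Hcomp X (fun y z => tc R y z) Husc) as [l Hl].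
  { intros x; destruct (Hdom x) as [y [Hyx _]]; now exists y. }
  assert (Hl_ne : l <> nil).
  { destruct (Hl x0) as [i [Hi _]]; intros ->; destruct Hi. }
  destruct (list_minimal_exists X tc_dominates tc_dominates_irrefl
              tc_dominates_trans l Hl_ne) as [m [_ Hmin]].
  destruct (Hdom m) as [y Hym].
  destruct (Hl y) as [j [Hj Hjy]].
  destruct Hym as [Hym Hmy].
  apply (Hmin j Hj); split.
  - exact (tc_trans X R j y m Hjy Hym).
  - intros Hmj; exact (Hmy (tc_trans X R m j y Hmj Hjy)).
Qed.

End Undominated.

Theorem lemma1 (X : Type) (R : X -> X -> Prop) (tau : (X -> Prop) -> Prop) :
  (exists x : X, True) ->
  is_topology tau ->
  compact_top tau ->
  upper_tc_semicontinuous R tau ->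
  exists F : X -> Prop, (exists x, F x) /\ w_stable R F.
Proof.
  intros Hne _ Hcomp Husc.
  destruct (exists_tc_undominated X R tau Hne Hcomp Husc) as [x Hx].
  exists (fun z => z = x); split.
  - now exists x.
  - exact (w_stable_singleton X R x Hx).
Qed.
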